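(* For every integer $k\ge0$, on $(0,1)$, $$W^{(k+1)}(t)=W^{(k)}(t)\Phi^{(k)}(t)\qquad\text{and}\qquad \big(W^{(k+1)}(t)\big)'=W^{(k)}(t)\Psi^{(k)}(t).$$
   Context: Fix real $\alpha,\beta,v$ with $\alpha>-1$, $\beta>-1$, $|\alpha-\beta|<|v|<\alpha+\beta+2$; $\kappa_{\pm v,\pm\beta}=\alpha\pm v\pm\beta$. For real parameters $a,b,v$ write $\kappa'_{\pm v,\pm b}=a\pm v\pm b$ and define $$W^{(a,b,v)}(t)=t^a(1-t)^b\begin{pmatrix}\frac{v(\kappa'_{v,b}+2)}{\kappa'_{v,-b}}t^2-(\kappa'_{v,b}+2)t+(a+1) & (a+b+2)t-(a+1)\\ (a+b+2)t-(a+1) & -\frac{v(\kappa'_{-v,b}+2)}{\kappa'_{-v,-b}}t^2-(\kappa'_{-v,b}+2)t+(a+1)\end{pmatrix},\quad t\in(0,1),$$ and $W^{(k)}=W^{(\alpha+k,\beta+k,v)}$ for integers $k\ge0$. Define $\Phi^{(k)}(t)=\mathscr A_2^kt^2+\mathscr A_1^kt+\mathscr A_0^k$ and $\Psi^{(k)}(t)=\mathscr B_1^kt+\mathscr B_0^k$ with $\mathscr A_2^k=\mathrm{diag}\Big(-\frac{\kappa_{v,\beta}+2(k+2)}{\kappa_{v,\beta}+2(k+1)},-\frac{\kappa_{-v,\beta}+2(k+2)}{\kappa_{-v,\beta}+2(k+1)}\Big)$, $\mathscr A_1^k=\frac{2}{(\kappa_{-v,\beta}+2(k+1))(\kappa_{v,\beta}+2(k+1))}\begin{pmatrix}0&\kappa_{v,-\beta}\\\kappa_{-v,-\beta}&0\end{pmatrix}-\mathscr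 A_2^k$, $\mathscr A_0^k=\frac{\kappa_{v,-\beta}\kappa_{-v,-\beta}}{v(\kappa_{-v,\beta}+2(k+1))(\kappa_{v,\beta}+2(k+1))}\begin{pmatrix}-1&1\\-1&1\end{pmatrix}$, $\mathscr B_1^k=(\alpha+\beta+4+2k)\mathscr A_2^k$, $\mathscr B_0^k=\Big(-(\alpha+k+1)I-\frac1v\mathrm{diag}(-\kappa_{-v,-\beta},\kappa_{v,-\beta})\Big)\mathscr A_2^k+\frac1{2v}\Big(\frac{\alpha+\beta+2k+4}{v}\mathscr A_1^k+\mathscr B_1^k\Big)\mathrm{diag}\big(-\kappa_{-v,\beta}-2(k+1),\ \kappa_{v,\beta}+2(k+1)\big)$. *)

From HB Require Import structures.
From mathcomp Require Import all_boot all_order all_algebra.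
From mathcomp Require Import all_classical all_reals all_analysis.
Set Implicit Arguments. Unset Strict Implicit. Unset Printing Implicit Defensive.
Import Order.TTheory GRing.Theory Num.Theory.
Local Open Scope ring_scope.

Section Defs.
Variable R : realType.

Definition mx2 (a11 a12 a21 a22 : R) : 'M[R]_2 :=
  \matrix_(i < 2, j < 2)
    if (i : nat) == 0%N then (if (j : nat) == 0%N then a11 else a12)
    else (if (j : nat) == 0%N then a21 else a22).

Definition diag2 (a b : R) : 'M[R]_2 := mx2 a 0 0 b.

Definition Wabv (a b v t : R) : 'M[R]_2 :=
  (t `^ a * (1 - t) `^ b) *:
  mx2 (v * (a + v + b + 2) / (a + v - b) * t ^+ 2 - (a + v + b + 2) * t + (a + 1))
      ((a + b + 2) * t - (a + 1))
      ((a + b + 2) * t - (a + 1))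
      (- (v * (a - v + b + 2) / (a - v - b)) * t ^+ 2 - (a - v + b + 2) * t + (a + 1)).

Definition Wk (al be v : R) (k : nat) (t : R) : 'M[R]_2 :=
  Wabv (al + k%:R) (be + k%:R) v t.

Section Coeffs.
Variables (al be v : R) (k : nat).
Let kvb := al + v + be.
Let kmvb := al - v + be.
Let kvmb := al + v - be.
Let kmvmb := al - v - be.
Let dp := kvb + 2 * (k%:R + 1).
Let dm := kmvb + 2 * (k%:R + 1).

Definition A2 : 'M[R]_2 :=
  diag2 (- ((kvb + 2 * (k%:R + 2)) / dp)) (- ((kmvb + 2 * (k%:R + 2)) / dm)).
Definition A1 : 'M[R]_2 :=
  (2 / (dm * dp)) *: mx2 0 kvmb kmvmb 0 - A2.
Definition A0 : 'M[R]_2 :=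
  (kvmb * kmvmb / (v * dm * dp)) *: mx2 (-1) 1 (-1) 1.
Definition B1 : 'M[R]_2 := (al + be + 4 + 2 * k%:R) *: A2.
(* NOTE: the source prints ((al+be+2k+4)/v) A1 in the second summand; that
   literal version makes the derivative identity false unless v = 1.  We use the corrected coefficient (al+be+2k+4). *)
Definition B0 : 'M[R]_2 :=
  (- ((al + k%:R + 1)%:M) - v^-1 *: diag2 (- kmvmb) kvmb) *m A2
  + (1 / (2 * v)) *: ((al + be + 2 * k%:R + 4) *: A1 + B1)
      *m diag2 (- kmvb - 2 * (k%:R + 1)) (kvb + 2 * (k%:R + 1)).

Definition Phi (t : R) : 'M[R]_2 := t ^+ 2 *: A2 + t *: A1 + A0.
Definition Psi (t : R) : 'M[R]_2 := t *: B1 + B0.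
End Coeffs.
End Defs.

From HB Require Import structures.
From mathcomp Require Import all_boot all_order all_algebra.
From mathcomp Require Import all_classical all_reals all_analysis.
From mathcomp Require Import ring lra.

Set Implicit Arguments. Unset Strict Implicit. Unset Printing Implicit Defensive.
Import Order.TTheory GRing.Theory Num.Theory.
Local Open Scope ring_scope.

(* Write W^{(a,b,v)}(t) = t^a (1-t)^b P_{a,b}(t), where P_{a,b} = Wpoly a b v
   is a 2x2 matrix polynomial of degree 2 with constant coefficient matrices.
   With a = alpha + k and b = beta + k, W^{(k+1)} has exponents a + 1, b + 1, so
     W^{(k+1)}(t)   = t^a (1-t)^b . t(1-t) P_{a+1,b+1}(t),
     W^{(k+1)}(t)'  = t^a (1-t)^b . [((a+1)(1-t) - (b+1)t) P_{a+1,b+1}(t)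
                                      + t(1-t) P'_{a+1,b+1}(t)].
   Both claims therefore reduce to identities between matrix polynomials,
     t(1-t) P_{a+1,b+1} = P_{a,b} Phi^{(k)}   (Wpoly_Phi),
     ((a+1)(1-t)-(b+1)t) P_{a+1,b+1} + t(1-t) P'_{a+1,b+1} = P_{a,b} Psi^{(k)}
                                               (Wpoly_Psi),
   which hold as soon as the denominators v, kappa_{+-v,-beta} and
   kappa_{+-v,beta} + 2(k+1) are nonzero; the parameter constraints guarantee
   this (admissible_denoms). *)

(* Ring operations on explicit 2x2 matrices act entrywise; together these rules
   turn any matrix expression built from mx2/diag2 into a single mx2. *)
Section Mx2Algebra.
Variable R : realType.
Implicit Types a b c d e f g h x : R.

Lemma mx2_add a b c d e f g h :
  mx2 a b c d + mx2 e f g h = mx2 (a + e) (b + f) (c + g) (d + h).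
Proof. by apply/matrixP => i j; rewrite !mxE; case: ifP; case: ifP. Qed.

Lemma mx2_opp a b c d : - mx2 a b c d = mx2 (- a) (- b) (- c) (- d).
Proof. by apply/matrixP => i j; rewrite !mxE; case: ifP; case: ifP. Qed.

Lemma mx2_scale x a b c d : x *: mx2 a b c d = mx2 (x * a) (x * b) (x * c) (x * d).
Proof. by apply/matrixP => i j; rewrite !mxE; case: ifP; case: ifP. Qed.

Lemma mx2_scalar x : x%:M = mx2 x 0 0 x :> 'M[R]_2.
Proof.
apply/matrixP => i j; rewrite !mxE.
by case: i j => [[|[|i]] Hi] [[|[|j]] Hj].
Qed.

Lemma mx2_mul a b c d e f g h :
  mx2 a b c d *m mx2 e f g h =
  mx2 (a * e + b * g) (a * f + b * h) (c * e + d * g) (c * f + d * h).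
Proof.
apply/matrixP => i j; rewrite !mxE !big_ord_recr big_ord0 /= !mxE /= add0r.
by case: i j => [[|[|i]] Hi] [[|[|j]] Hj].
Qed.

Definition mx2E := (mx2_add, mx2_opp, mx2_scale, mx2_scalar, mx2_mul).

End Mx2Algebra.

Section PolynomialPart.
Variable R : realType.
Variables a b v : R.

Definition Wcoef2 : 'M[R]_2 :=
  diag2 (v * (a + v + b + 2) / (a + v - b)) (- (v * (a - v + b + 2) / (a - v - b))).
Definition Wcoef1 : 'M[R]_2 :=
  mx2 (- (a + v + b + 2)) (a + b + 2) (a + b + 2) (- (a - v + b + 2)).
Definition Wcoef0 : 'M[R]_2 := mx2 (a + 1) (- (a + 1)) (- (a + 1)) (a + 1).

Definition Wpoly (t : R) : 'M[R]_2 := t ^+ 2 *: Wcoef2 + t *: Wcoef1 + Wcoef0.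
Definition dWpoly (t : R) : 'M[R]_2 := (2 * t) *: Wcoef2 + Wcoef1.

Lemma Wabv_Wpoly t : Wabv a b v t = (t `^ a * (1 - t) `^ b) *: Wpoly t.
Proof. by rewrite /Wabv /Wpoly /Wcoef2 /Wcoef1 /Wcoef0 /diag2 !mx2E; congr mx2; ring. Qed.

End PolynomialPart.

Section Recurrence.
Variable R : realType.
Variables (al be v : R) (k : nat).
Let a := al + k%:R.
Let b := be + k%:R.
Hypothesis hv : v != 0.
Hypothesis hvb : a + v - b != 0.
Hypothesis hmvb : a - v - b != 0.
Hypothesis hdp : al + v + be + 2 * (k%:R + 1) != 0.
Hypothesis hdm : al - v + be + 2 * (k%:R + 1) != 0.

Lemma Wpoly_Phi t :
  (t * (1 - t)) *: Wpoly (a + 1) (b + 1) v t = Wpoly a b v t *m Phi al be v k t.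
Proof.
rewrite /Wpoly /Wcoef2 /Wcoef1 /Wcoef0 /Phi /A2 /A1 /A0 /diag2 /a /b !mx2E.
by congr mx2; field; rewrite hv hdp hdm ?hvb ?hmvb.
Qed.

Lemma Wpoly_Psi t :
  ((a + 1) * (1 - t) - (b + 1) * t) *: Wpoly (a + 1) (b + 1) v t
    + (t * (1 - t)) *: dWpoly (a + 1) (b + 1) v t
  = Wpoly a b v t *m Psi al be v k t.
Proof.
rewrite /Wpoly /dWpoly /Wcoef2 /Wcoef1 /Wcoef0 /Psi /B0 /B1 /A1 /A2 /diag2 /a /b.
by rewrite !mx2E; congr mx2; field; rewrite hv hdp hdm ?hvb ?hmvb.
Qed.

End Recurrence.

Lemma admissible_denoms (R : realType) (al be v x : R) :
  `|al - be| < `|v| -> `|v| < al + be + 2 -> 0 <= x ->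
  [/\ v != 0, al + x + v - (be + x) != 0, al + x - v - (be + x) != 0,
      al + v + be + 2 * (x + 1) != 0 & al - v + be + 2 * (x + 1) != 0].
Proof.
rewrite !ltr_norml => /andP[lo hi] /andP[vlo vhi] x0.
have [v0|v0] := lerP 0 v; [move: lo hi; rewrite ger0_norm //|move: lo hi; rewrite ltr0_norm //].
all: by move=> lo hi; split; apply/eqP => E; lra.
Qed.

Section WeightDerivative.
Variable R : realType.
Implicit Types A B t : R.

Lemma powR_addr1 A t : 0 < t -> t `^ (A + 1) = t `^ A * t.
Proof. by move=> t0; rewrite powRD ?(gt_eqF t0) ?implybT // powRr1 // ltW. Qed.

Lemma weight_shift A B t : 0 < t < 1 ->
  t `^ (A + 1) * (1 - t) `^ (B + 1) = t `^ A * (1 - t) `^ B * (t * (1 - t)).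
Proof.
move=> /andP[t0 t1]; have t'0 : 0 < 1 - t by rewrite subr_gt0.
by rewrite !powR_addr1 //; ring.
Qed.

Lemma is_derive_weight A B t : 0 < t < 1 ->
  is_derive t 1 (fun s : R => s `^ (A + 1) * (1 - s) `^ (B + 1))
    (t `^ A * (1 - t) `^ B * ((A + 1) * (1 - t) - (B + 1) * t)).
Proof.
move=> /andP[t0 t1]; have t'0 : 0 < 1 - t by rewrite subr_gt0.
have dl : is_derive t 1 (fun s : R => s `^ (A + 1)) ((A + 1) * t `^ A).
  by have := is_derive1_powR (A + 1) t0; rewrite addrK.
have dr : is_derive t 1 ((fun s : R => s `^ (B + 1)) \o (fun s => 1 - s))
    ((B + 1) * (1 - t) `^ B * -1).
  apply: is_derive1_comp; first by have := is_derive1_powR (B + 1) t'0; rewrite addrK.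
  by have := is_deriveB (is_derive_cst (1 : R^o) t 1) (is_derive_id t 1); rewrite sub0r.
apply: is_derive_eq (is_deriveM dl dr) _.
by rewrite /GRing.scale /= !powR_addr1 //; ring.
Qed.

End WeightDerivative.

Lemma is_derive_quadratic (R : realType) (c2 c1 c0 t : R) :
  is_derive t 1 (fun s : R => s ^+ 2 * c2 + s * c1 + c0) (2 * t * c2 + c1).
Proof.
have cst (c : R) : is_derive t 1 (cst (c : R^o)) 0 := is_derive_cst c t 1.
have := is_deriveD (is_deriveD (is_deriveM (is_deriveX 2 (is_derive_id t 1)) (cst c2))
    (is_deriveM (is_derive_id t 1) (cst c1))) (cst c0).
move/is_derive_eq; apply.
by rewrite /GRing.scale /=; ring.
Qed.

Lemma is_derive_Wabv_entry (R : realType) (a b v t : R) (i j : 'I_2) : 0 < t < 1 ->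
  is_derive t 1 (fun s : R => Wabv (a + 1) (b + 1) v s i j)
    (((t `^ a * (1 - t) `^ b) *:
       (((a + 1) * (1 - t) - (b + 1) * t) *: Wpoly (a + 1) (b + 1) v t
        + (t * (1 - t)) *: dWpoly (a + 1) (b + 1) v t)) i j).
Proof.
move=> ht; pose C2 := Wcoef2 (a + 1) (b + 1) v.
pose C1 := Wcoef1 (a + 1) (b + 1) v; pose C0 := Wcoef0 (a + 1).
have -> : (fun s : R => Wabv (a + 1) (b + 1) v s i j) =
    (fun s => s `^ (a + 1) * (1 - s) `^ (b + 1)) *
    (fun s => s ^+ 2 * C2 i j + s * C1 i j + C0 i j).
  by apply: funext => s; rewrite Wabv_Wpoly /Wpoly !mxE.
apply: is_derive_eq (is_deriveM (is_derive_weight a b ht) (is_derive_quadratic _ _ _ t)) _.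
by rewrite /GRing.scale /= weight_shift // /dWpoly !mxE; ring.
Qed.

(* Main theorem: W^{(k+1)} = W^{(k)} Phi^{(k)} and (W^{(k+1)})' = W^{(k)} Psi^{(k)}
   on (0,1). *)
Theorem mainTheorem8 (R : realType) (al be v : R)
  (hal : -1 < al) (hbe : -1 < be)
  (hv1 : `|al - be| < `|v|) (hv2 : `|v| < al + be + 2) :
  forall (k : nat) (t : R), 0 < t < 1 ->
    Wk al be v k.+1 t = Wk al be v k t *m Phi al be v k t /\
    (forall i j : 'I_2,
       is_derive t 1 (fun s : R => Wk al be v k.+1 s i j)
                 ((Wk al be v k t *m Psi al be v k t) i j)).
Proof.
move=> k t ht.
have [hv hvb hmvb hdp hdm] := admissible_denoms hv1 hv2 (ler0n R k).
have shiftW : Wk al be v k.+1 = Wabv (al + k%:R + 1) (be + k%:R + 1) v.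
  by rewrite /Wk -natr1 !addrA.
rewrite shiftW /Wk !Wabv_Wpoly -!scalemxAl.
split=> [|i j].
- by rewrite -Wpoly_Phi // scalerA weight_shift.
- by rewrite -Wpoly_Psi //; exact: is_derive_Wabv_entry.
Qed.
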